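(* Let $(X,d)$ be a compact metric space and let $\mathcal{F}=\{X; f_{\lambda}\mid\lambda\in\Lambda\}$ be an iterated function system in which every $f_\lambda:X\to X$ is continuous and surjective. If $\mathcal{F}$ has the average shadowing property, then every point $x\in X$ is a chain recurrent point of $\mathcal{F}$; moreover, $\mathcal{F}$ has only one chain component, namely the whole space, i.e. for every $x,y\in X$ and every $\epsilon>0$ there exists an $\epsilon$-chain of $\mathcal{F}$ from $x$ to $y$.
   Context: An iterated function system (IFS) $\mathcal{F}=\{X; f_{\lambda}\mid\lambda\in\Lambda\}$ on a metric space $(X,d)$ is a family of continuous maps $f_\lambda:X\to X$ indexed by a finite nonempty set $\Lambda$. For $\sigma=(\lambda_0,\lambda_1,\dots)\in\Lambda^{\mathbb{Z}_+}$ write $\mathcal{F}_{\sigma_n}=f_{\lambda_{n-1}}\circ\cdots\circ f_{\lambda_0}$ for $n\ge1$ and $\mathcal{F}_{\sigma_0}=\mathrm{id}_X$. For $\delta>0$, a sequence $(x_i)_{i\ge0}$ in $X$ is a $\delta$-average pseudo-orbit of $\mathcal{F}$ if there exist a natural number $N$ and $\sigma=(\lambda_0,\lambda_1,\dots)\in\Lambda^{\mathbb{Z}_+}$ such that for all $n\ge N$, $\frac1n\sum_{i=0}^{n-1}d(f_{\lambda_i}(x_i),x_{i+1})<\delta$. A sequence $(x_i)_{i\ge0}$ is $\epsilon$-shadowed in average by $z\in X$ if there exists $\sigma\in\Lambda^{\mathbb{Z}_+}$ with $\limsup_{n\to\infty}\frac1n\sum_{i=0}^{n-1}d(\mathcal{F}_{\sigma_i}(z),x_i)<\epsilon$.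 $\mathcal{F}$ has the average shadowing property if for every $\epsilon>0$ there is $\delta>0$ such that every $\delta$-average pseudo-orbit of $\mathcal{F}$ is $\epsilon$-shadowed in average by some point of $X$. For $\epsilon>0$ and $x,y\in X$, an $\epsilon$-chain of $\mathcal{F}$ from $x$ to $y$ is a finite sequence $p_0=x,p_1,\dots,p_n=y$ ($n\ge1$) of points of $X$ together with indices $\lambda_0,\dots,\lambda_{n-1}\in\Lambda$ such that $d(f_{\lambda_i}(p_i),p_{i+1})\le\epsilon$ for all $i$. A point $x$ is chain recurrent for $\mathcal{F}$ if for every $\epsilon>0$ there is an $\epsilon$-chain from $x$ to $x$. *)

From Stdlib Require Import Reals Lra List.
From Coquelicot Require Import Coquelicot.
Open Scope R_scope.

Definition is_metric {X : Type} (d : X -> X -> R) : Prop :=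
  (forall x y, 0 <= d x y) /\
  (forall x y, d x y = 0 <-> x = y) /\
  (forall x y, d x y = d y x) /\
  (forall x y z, d x z <= d x y + d y z).

Definition metric_open {X : Type} (d : X -> X -> R) (U : X -> Prop) : Prop :=
  forall x, U x -> exists r, 0 < r /\ forall y, d x y < r -> U y.

Definition metric_compact {X : Type} (d : X -> X -> R) : Prop :=
  forall (I : Type) (U : I -> X -> Prop),
    (forall i, metric_open d (U i)) ->
    (forall x, exists i, U i x) ->
    exists l : list I, forall x, exists i, In i l /\ U i x.

Definition metric_continuous {X : Type} (d : X -> X -> R) (f : X -> X) : Prop :=
  forall x eps, 0 < eps -> exists delta, 0 < delta /\
    forall y, d x y < delta -> d (f x) (f y) < eps.

Definition surjective {X : Type} (f : X -> X) : Prop := forall y, exists x, f x = y.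

Definition finite_nonempty (L : Type) : Prop :=
  inhabited L /\ exists l : list L, forall a : L, In a l.

Fixpoint sum_upto (u : nat -> R) (n : nat) : R :=
  match n with
  | O => 0
  | S m => sum_upto u m + u m
  end.

(* F_{sigma_n} = f_{lambda_{n-1}} o ... o f_{lambda_0}, F_{sigma_0} = id *)
Fixpoint ifs_iter {X L : Type} (f : L -> X -> X) (sigma : nat -> L) (n : nat) (z : X) : X :=
  match n with
  | O => z
  | S m => f (sigma m) (ifs_iter f sigma m z)
  end.

Definition average_pseudo_orbit {X L : Type} (d : X -> X -> R) (f : L -> X -> X)
    (delta : R) (x : nat -> X) : Prop :=
  exists (N : nat) (sigma : nat -> L), forall n : nat, (N <= n)%nat -> (0 < n)%nat ->
    / INR n * sum_upto (fun i => d (f (sigma i) (x i)) (x (S i))) n < delta.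

Definition average_shadowed {X L : Type} (d : X -> X -> R) (f : L -> X -> X)
    (eps : R) (x : nat -> X) (z : X) : Prop :=
  exists sigma : nat -> L,
    Rbar_lt (LimSup_seq (fun n => / INR n * sum_upto (fun i => d (ifs_iter f sigma i z) (x i)) n))
            (Finite eps).

Definition average_shadowing_property {X L : Type} (d : X -> X -> R) (f : L -> X -> X) : Prop :=
  forall eps, 0 < eps -> exists delta, 0 < delta /\
    forall x : nat -> X, average_pseudo_orbit d f delta x ->
      exists z : X, average_shadowed d f eps x z.

Definition eps_chain {X L : Type} (d : X -> X -> R) (f : L -> X -> X)
    (eps : R) (x y : X) : Prop :=
  exists (n : nat) (p : nat -> X) (lam : nat -> L),
    (1 <= n)%nat /\ p O = x /\ p n = y /\
    forall i, (i < n)%nat -> d (f (lam i) (p i)) (p (S i)) <= eps.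

Definition chain_recurrent {X L : Type} (d : X -> X -> R) (f : L -> X -> X) (x : X) : Prop :=
  forall eps, 0 < eps -> eps_chain d f eps x x.

(* Fix one of the maps, g.  For x, y and M large, let u be a g^(M-1)-preimage of y and
   consider the periodic sequence that follows the g-orbit of x for M steps, then the g-orbit
   of u for M steps, and so on.  It jumps only once every M steps, so it is an average
   pseudo-orbit with error at most diam X / M.  Let z shadow it in average within eps/4
   along some orbit.  If in some period of length 2M the orbit of z comes eps-close to a
   point g^r x with r >= 1 and later to a point g^s u, then following g from x, the orbit of
   z, and g from g^s u to y is an eps-chain from x to y.  Otherwise every period contributes
   at least (M-1) eps to the sum of distances, and the average is at least eps/4. *)

From Stdlib Require Import Reals Lra Lia List Relations Classical.
From Coquelicot Require Import Coquelicot.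
Open Scope R_scope.

Lemma sum_upto_add (u : nat -> R) (a b : nat) :
  sum_upto u (a + b) = sum_upto u a + sum_upto (fun r => u (a + r)%nat) b.
Proof.
  induction b as [|b IH]; simpl.
  - rewrite Nat.add_0_r. ring.
  - rewrite Nat.add_succ_r. simpl. rewrite IH. ring.
Qed.

Lemma sum_upto_le (u v : nat -> R) (n : nat) :
  (forall i, (i < n)%nat -> u i <= v i) -> sum_upto u n <= sum_upto v n.
Proof.
  induction n as [|n IH]; intros Huv; simpl; [lra|].
  pose proof (Huv n (Nat.lt_succ_diag_r n)).
  assert (sum_upto u n <= sum_upto v n) by (apply IH; intros; apply Huv; lia).
  lra.
Qed.

Lemma sum_upto_const (c : R) (n : nat) : sum_upto (fun _ => c) n = INR n * c.
Proof. induction n as [|n IH]; simpl sum_upto; rewrite ?S_INR, ?IH; simpl; ring. Qed.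

Lemma sum_upto_nonneg (u : nat -> R) (n : nat) :
  (forall i, 0 <= u i) -> 0 <= sum_upto u n.
Proof.
  intros Hu. rewrite <- (Rmult_0_r (INR n)), <- sum_upto_const.
  apply sum_upto_le; auto.
Qed.

Lemma sum_upto_ge_on (u : nat -> R) (c : R) (a b n : nat) :
  (forall i, 0 <= u i) -> (forall i, (a <= i < b)%nat -> c <= u i) -> (a <= b <= n)%nat ->
  INR (b - a) * c <= sum_upto u n.
Proof.
  intros Hu Hc Hab.
  replace n with (a + ((b - a) + (n - b)))%nat by lia.
  rewrite !sum_upto_add, <- sum_upto_const.
  assert (sum_upto (fun _ => c) (b - a) <= sum_upto (fun r => u (a + r)%nat) (b - a)).
  { apply sum_upto_le. intros i Hi. apply Hc. lia. }
  pose proof (sum_upto_nonneg u a Hu).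
  pose proof (sum_upto_nonneg (fun r => u (a + (b - a + r))%nat) (n - b) (fun i => Hu _)).
  lra.
Qed.

Lemma sum_upto_blocks_ge (u : nat -> R) (c : R) (P K : nat) :
  (forall q, c <= sum_upto (fun r => u (P * q + r)%nat) P) ->
  INR K * c <= sum_upto u (P * K).
Proof.
  intros Hc. induction K as [|K IH].
  - rewrite Nat.mul_0_r. simpl. lra.
  - replace (P * S K)%nat with (P * K + P)%nat by lia.
    rewrite sum_upto_add, S_INR. pose proof (Hc K). lra.
Qed.

Lemma succ_div_mod (M i : nat) : M <> 0%nat ->
  (S i mod M = 0 /\ S i / M = S (i / M))%nat \/
  (S i mod M = S (i mod M) /\ S i / M = i / M)%nat.
Proof.
  intros HM. pose proof (Nat.div_mod i M HM). pose proof (Nat.mod_upper_bound i M HM).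
  destruct (Nat.eq_dec (S (i mod M)) M) as [E|E]; [left|right]; split.
  - symmetry. apply (Nat.mod_unique _ _ (S (i / M))); lia.
  - symmetry. apply (Nat.div_unique _ _ _ 0); lia.
  - symmetry. apply (Nat.mod_unique _ _ (i / M)); lia.
  - symmetry. apply (Nat.div_unique _ _ _ (S (i mod M))); lia.
Qed.

Lemma sum_upto_sparse_le (u : nat -> R) (M : nat) (B : R) : M <> 0%nat -> 0 <= B ->
  (forall i, u i <= if (S i mod M =? 0)%nat then B else 0) ->
  forall n, sum_upto u n <= B * INR (n / M).
Proof.
  intros HM HB Hu n. induction n as [|n IH].
  - rewrite Nat.Div0.div_0_l. simpl. lra.
  - specialize (Hu n). simpl sum_upto.
    destruct (succ_div_mod M n HM) as [[E Q]|[E Q]]; rewrite Q.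
    + rewrite E, Nat.eqb_refl in Hu. rewrite S_INR. lra.
    + rewrite E in Hu. simpl in Hu. lra.
Qed.

Lemma block_average_ge_quarter (u : nat -> R) (M K : nat) (eps : R) :
  (2 <= M)%nat -> (0 < K)%nat -> 0 < eps ->
  INR K * (INR (M - 1) * eps) <= sum_upto u (2 * M * K) ->
  eps / 4 <= / INR (2 * M * K) * sum_upto u (2 * M * K).
Proof.
  intros HM HK Heps Hlow.
  rewrite !mult_INR. rewrite minus_INR in Hlow by lia.
  change (INR 2) with 2. change (INR 1) with 1 in Hlow.
  set (k := INR K) in *. set (m := INR M) in *. set (S0 := sum_upto u _) in *.
  assert (Hk : 0 < k) by (apply lt_0_INR; lia).
  assert (Hm : 2 <= m) by (apply (le_INR 2); lia).
  assert (0 <= k * eps * (m - 2)) by (apply Rmult_le_pos; nra).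
  apply (Rmult_le_reg_l (2 * m * k)); [nra|].
  rewrite <- Rmult_assoc, Rinv_r, Rmult_1_l by nra. nra.
Qed.

Lemma LimSup_seq_lt_eventually (u : nat -> R) (c : R) :
  Rbar_lt (LimSup_seq u) (Finite c) -> exists N, forall n, (N <= n)%nat -> u n < c.
Proof.
  destruct (ex_LimSup_seq u) as [l Hl].
  rewrite (is_LimSup_seq_unique u l Hl).
  destruct l as [l| |]; simpl; intros Hc.
  - assert (Hp : 0 < c - l) by lra.
    destruct (Hl (mkposreal _ Hp)) as [_ [N HN]]. exists N. intros n Hn.
    specialize (HN n Hn). simpl in HN. lra.
  - contradiction.
  - exact (Hl c).
Qed.

Lemma metric_compact_bounded {X : Type} (d : X -> X -> R) :
  is_metric d -> metric_compact d -> X -> exists B, forall a b, d a b <= B.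
Proof.
  intros [_ [_ [Hsym Htri]]] Hcpt x0.
  destruct (Hcpt nat (fun n y => d x0 y < INR n)) as [l Hl].
  - intros n y Hy. exists (INR n - d x0 y). split; [lra|].
    intros y' Hy'. pose proof (Htri x0 y y'). lra.
  - intros y. destruct (INR_unbounded (d x0 y)) as [n Hn]. exists n. lra.
  - set (Bl := fold_right (fun n acc => Rmax (INR n) acc) 0 l).
    assert (HBl : forall n, In n l -> INR n <= Bl).
    { unfold Bl. clear Hl. induction l as [|a l IH]; simpl; [tauto|].
      intros n [->|H]; [apply Rmax_l|]. eapply Rle_trans; [apply IH; exact H|apply Rmax_r]. }
    exists (2 * Bl). intros a b.
    destruct (Hl a) as [n [Hn Ha]]. destruct (Hl b) as [m [Hm Hb]].
    pose proof (HBl n Hn). pose proof (HBl m Hm).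
    pose proof (Htri a x0 b). pose proof (Hsym a x0). lra.
Qed.

Lemma iter_surjective {X : Type} (g : X -> X) :
  surjective g -> forall n y, exists u, Nat.iter n g u = y.
Proof.
  intros Hg n. induction n as [|n IH]; intros y; [exists y; reflexivity|].
  destruct (Hg y) as [v <-]. destruct (IH v) as [u <-]. exists u. reflexivity.
Qed.

Definition eps_step {X L : Type} (d : X -> X -> R) (f : L -> X -> X) (eps : R)
  (p q : X) : Prop := exists a, d (f a p) q <= eps.

Lemma eps_chain_of_clos_trans {X L : Type} (d : X -> X -> R) (f : L -> X -> X) (eps : R)
  (x y : X) : clos_trans X (eps_step d f eps) x y -> eps_chain d f eps x y.
Proof.
  rewrite clos_trans_t1n_iff.
  induction 1 as [p q [a H]|p q r [a H] _ IH].
  - exists 1%nat, (fun k => match k with O => p | _ => q end), (fun _ => a).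
    repeat split; [lia|]. intros [|i] Hi; [exact H|lia].
  - destruct IH as (n & pp & lam & Hn & H0 & Hn' & Hst).
    exists (S n), (fun k => match k with O => p | S k => pp k end),
      (fun k => match k with O => a | S k => lam k end).
    repeat split; [lia|exact Hn'|]. intros [|i] Hi.
    + rewrite H0. exact H.
    + apply Hst. lia.
Qed.

Lemma clos_trans_rt_step_rt {A : Type} (R0 : relation A) (x a b y : A) :
  clos_refl_trans A R0 x a -> R0 a b -> clos_refl_trans A R0 b y -> clos_trans A R0 x y.
Proof.
  intros Hxa Hab Hby. apply (clos_rt_t _ _ _ _ _ Hxa). clear Hxa.
  rewrite clos_rt_rt1n_iff in Hby. rewrite clos_trans_t1n_iff.
  revert a Hab. induction Hby as [|b c y Hbc _ IH]; intros a Hab.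
  - apply t1n_step. exact Hab.
  - apply Relation_Operators.t1n_trans with b; [exact Hab|]. apply IH. exact Hbc.
Qed.

Lemma clos_refl_trans_orbit {X L : Type} (d : X -> X -> R) (f : L -> X -> X) (eps : R)
  (p : nat -> X) (s : nat -> L) (i j : nat) :
  is_metric d -> 0 <= eps -> (forall k, f (s k) (p k) = p (S k)) -> (i <= j)%nat ->
  clos_refl_trans X (eps_step d f eps) (p i) (p j).
Proof.
  intros (_ & Hid & _) He Hp Hij. induction Hij as [|j Hij IH].
  - apply rt_refl.
  - apply rt_trans with (p j); [exact IH|].
    apply rt_step. exists (s j). rewrite Hp, (proj2 (Hid _ _) eq_refl). exact He.
Qed.

Section Loop.

Variables (X L : Type) (d : X -> X -> R) (f : L -> X -> X) (a0 : L) (x u y : X) (M : nat).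
Hypothesis Hd : is_metric d.
Hypothesis HM : M <> 0%nat.
Hypothesis Huy : Nat.iter (M - 1) (f a0) u = y.

Definition loop (i : nat) : X :=
  Nat.iter (i mod M) (f a0) (if Nat.even (i / M) then x else u).

Lemma loop_succ (i : nat) : (S i mod M <> 0)%nat -> loop (S i) = f a0 (loop i).
Proof.
  intros Hi. unfold loop.
  destruct (succ_div_mod M i HM) as [[E _]|[E Q]]; [contradiction|].
  rewrite E, Q. reflexivity.
Qed.

Lemma loop_block (q r : nat) : (r < M)%nat ->
  loop (M * q + r) = Nat.iter r (f a0) (if Nat.even q then x else u).
Proof.
  intros Hr. unfold loop.
  rewrite <- (Nat.mod_unique (M * q + r) M q r), <- (Nat.div_unique (M * q + r) M q r); auto.
Qed.

Lemma loop_average_pseudo_orbit (B delta : R) :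
  (forall a b, d a b <= B) -> B < INR M * delta -> average_pseudo_orbit d f delta loop.
Proof.
  intros HB HBM. pose proof Hd as (Hnn & Hid & _). exists 1%nat, (fun _ => a0). intros n _ Hn.
  assert (HB0 : 0 <= B) by (pose proof (HB x x); pose proof (Hnn x x); lra).
  assert (Hsum : sum_upto (fun i => d (f a0 (loop i)) (loop (S i))) n <= B * INR (n / M)).
  { apply sum_upto_sparse_le; auto. intros i.
    destruct (Nat.eqb_spec (S i mod M) 0) as [_|E]; [apply HB|].
    rewrite loop_succ by exact E. rewrite (proj2 (Hid _ _) eq_refl). lra. }
  assert (Hdiv : INR M * INR (n / M) <= INR n)
    by (rewrite <- mult_INR; apply le_INR, Nat.Div0.mul_div_le).
  assert (Hn0 : 0 < INR n) by (apply lt_0_INR; lia).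
  assert (HM0 : 0 < INR M) by (apply lt_0_INR; lia).
  apply (Rmult_lt_reg_l (INR n)); [exact Hn0|].
  rewrite <- Rmult_assoc, Rinv_r, Rmult_1_l by lra.
  apply (Rmult_lt_reg_l (INR M)); [exact HM0|].
  pose proof (pos_INR (n / M)). nra.
Qed.

Lemma loop_chain_of_close (eps : R) (z : X) (sigma : nat -> L) (q r1 r2 : nat) :
  0 <= eps -> (1 <= r1 < M)%nat -> (M <= r2 < 2 * M)%nat ->
  d (ifs_iter f sigma (2 * M * q + r1) z) (loop (2 * M * q + r1)) < eps ->
  d (ifs_iter f sigma (2 * M * q + r2) z) (loop (2 * M * q + r2)) < eps ->
  clos_trans X (eps_step d f eps) x y.
Proof.
  intros Heps Hr1 Hr2. pose proof Hd as (_ & _ & Hsym & _).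
  set (i := (2 * M * q + r1)%nat). set (j := (2 * M * q + r2)%nat). intros Hi Hj.
  set (F := fun k => ifs_iter f sigma k z).
  assert (Hxi : loop i = Nat.iter r1 (f a0) x).
  { replace i with (M * (2 * q) + r1)%nat by lia.
    rewrite loop_block by lia. rewrite Nat.even_mul. reflexivity. }
  assert (Huj : loop j = Nat.iter (r2 - M) (f a0) u).
  { replace j with (M * (2 * q + 1) + (r2 - M))%nat by lia.
    rewrite loop_block by lia. rewrite Nat.even_add, Nat.even_mul. reflexivity. }
  apply clos_trans_rt_step_rt with (Nat.iter (r1 - 1) (f a0) x) (F i).
  - apply (clos_refl_trans_orbit d f eps (fun k => Nat.iter k (f a0) x) (fun _ => a0) 0);
      auto. lia.
  - exists a0. replace (f a0 (Nat.iter (r1 - 1) (f a0) x)) with (Nat.iter r1 (f a0) x).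
    + rewrite <- Hxi, Hsym. exact (Rlt_le _ _ Hi).
    + set (k := (r1 - 1)%nat). replace r1 with (S k) by lia. reflexivity.
  - apply rt_trans with (F (j - 1)%nat).
    { apply (clos_refl_trans_orbit d f eps F sigma); auto. lia. }
    apply rt_trans with (Nat.iter (r2 - M) (f a0) u).
    + apply rt_step. exists (sigma (j - 1)%nat).
      replace (f (sigma (j - 1)%nat) (F (j - 1)%nat)) with (F j).
      * rewrite <- Huj. exact (Rlt_le _ _ Hj).
      * set (k := (j - 1)%nat). replace j with (S k) by lia. reflexivity.
    + rewrite <- Huy.
      apply (clos_refl_trans_orbit d f eps (fun k => Nat.iter k (f a0) u) (fun _ => a0));
        auto. lia.
Qed.

Lemma loop_chain_or_far (eps : R) (z : X) (sigma : nat -> L) (q : nat) : 0 <= eps ->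
  clos_trans X (eps_step d f eps) x y \/
  INR (M - 1) * eps <=
    sum_upto (fun r => d (ifs_iter f sigma (2 * M * q + r) z) (loop (2 * M * q + r)))
      (2 * M).
Proof.
  intros Heps. pose proof Hd as (Hnn & _).
  set (e := fun k => d (ifs_iter f sigma k z) (loop k)).
  assert (Hfar : forall a b, (a <= b <= 2 * M)%nat ->
            (forall r, (a <= r < b)%nat -> eps <= e (2 * M * q + r)%nat) ->
            INR (b - a) * eps <= sum_upto (fun r => e (2 * M * q + r)%nat) (2 * M)).
  { intros a b Hab H. apply sum_upto_ge_on; auto. intros; apply Hnn. }
  destruct (classic (forall r, (1 <= r < M)%nat -> eps <= e (2 * M * q + r)%nat)) as [H1|H1].
  { right. apply Hfar; auto. lia. }
  destruct (classic (forall r, (M <= r < 2 * M)%nat -> eps <= e (2 * M * q + r)%nat)) as [H2|H2].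
  { right. replace (M - 1)%nat with (2 * M - S M)%nat by lia.
    apply Hfar; [lia|]. intros r Hr. apply H2. lia. }
  left.
  apply not_all_ex_not in H1 as [r1 H1]. apply imply_to_and in H1 as [Hr1 H1].
  apply not_all_ex_not in H2 as [r2 H2]. apply imply_to_and in H2 as [Hr2 H2].
  apply Rnot_le_lt in H1, H2.
  exact (loop_chain_of_close eps z sigma q r1 r2 Heps Hr1 Hr2 H1 H2).
Qed.

End Loop.

Arguments loop {X L}.

Lemma clos_trans_of_average_shadowing {X L : Type} (d : X -> X -> R) (f : L -> X -> X)
  (a0 : L) (B : R) :
  is_metric d -> (forall a b, d a b <= B) -> surjective (f a0) ->
  average_shadowing_property d f ->
  forall x y eps, 0 < eps -> clos_trans X (eps_step d f eps) x y.
Proof.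
  intros Hd HB Hsurj Hasp x y eps Heps.
  destruct (Hasp (eps / 4)) as (delta & Hdelta & Hshadow); [lra|].
  destruct (INR_unbounded (B / delta)) as [M0 HM0].
  set (M := S (S M0)).
  assert (HBM : B < INR M * delta).
  { apply Rlt_div_l; [exact Hdelta|].
    unfold M. rewrite !S_INR. pose proof (pos_INR M0). lra. }
  destruct (iter_surjective (f a0) Hsurj (M - 1) y) as [u Hu].
  destruct (Hshadow _ (loop_average_pseudo_orbit X L d f a0 x u M Hd ltac:(lia) B delta HB HBM))
    as (z & sigma & Hlimsup).
  apply LimSup_seq_lt_eventually in Hlimsup as [N HN].
  apply NNPP. intros Hno.
  set (e := fun i => d (ifs_iter f sigma i z) (loop f a0 x u M i)).
  assert (Hlow : INR (S N) * (INR (M - 1) * eps) <= sum_upto e (2 * M * S N)).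
  { apply sum_upto_blocks_ge. intros q.
    destruct (loop_chain_or_far X L d f a0 x u y M Hd ltac:(lia) Hu eps z sigma q ltac:(lra));
      [contradiction|assumption]. }
  specialize (HN (2 * M * S N)%nat ltac:(lia)). fold e in HN.
  pose proof (block_average_ge_quarter e M (S N) eps ltac:(lia) ltac:(lia) Heps Hlow).
  lra.
Qed.

Theorem mainTheorem6 (X : Type) (d : X -> X -> R) (L : Type) (f : L -> X -> X)
  (Hd : is_metric d) (Hcpt : metric_compact d) (HL : finite_nonempty L)
  (Hcont : forall a, metric_continuous d (f a)) (Hsurj : forall a, surjective (f a))
  (Hasp : average_shadowing_property d f) :
  (forall x : X, chain_recurrent d f x) /\
  (forall (x y : X) (eps : R), 0 < eps -> eps_chain d f eps x y).
Proof.
  destruct HL as [[a0] _].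
  assert (Hchain : forall (x y : X) (eps : R), 0 < eps -> eps_chain d f eps x y).
  { intros x y eps Heps.
    destruct (metric_compact_bounded d Hd Hcpt x) as [B HB].
    apply eps_chain_of_clos_trans.
    exact (clos_trans_of_average_shadowing d f a0 B Hd HB (Hsurj a0) Hasp x y eps Heps). }
  split; [|exact Hchain].
  intros x eps Heps. exact (Hchain x x eps Heps).
Qed.
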